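(* Let $\varphi_o$ be a $G_2$-structure on an oriented $7$-manifold with metric $g_o$ (components $g_{ij}$, inverse $g^{ij}$, in a local frame) and Hodge star $*_o$, let $w=w^ie_i$ be a vector field, and let $\tilde\varphi = \varphi_o + w\lrcorner *_o\varphi_o$ with metric $\tilde g$. Then the metric of $\tilde\varphi$ on $1$-forms is \[ \tilde g^{ij} = \frac{1}{(1+|w|_o^2)^{1/3}}\left(g^{ij} + w^iw^j\right). \]
   Context: A $G_2$-structure on an oriented $7$-manifold $M$ is a $3$-form $\varphi$ such that at each point $p$ there are local coordinates $x^1,\dots,x^7$ with $\varphi_p = dx^{123} - dx^{167} - dx^{527} - dx^{563} + dx^{415} + dx^{426} + dx^{437}$. It determines a Riemannian metric $g$ (equal to $\sum_k dx^k\otimes dx^k$ at $p$), a volume form and Hodge star, with $g(u,v)\,\mathrm{vol} = \frac16 (u\lrcorner\varphi)\wedge(v\lrcorner\varphi)\wedge\varphi$. $\tilde g^{ij}$ denotes the inverse matrix of $\tilde g_{ij}$. *)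

(* Pointwise linear algebra at one point p,
   in the coordinates of an arbitrary local frame e_1..e_7 of T_pM. *)
From HB Require Import structures.
From mathcomp Require Import all_boot all_order all_algebra.
From mathcomp Require Import reals exp.
Set Implicit Arguments. Unset Strict Implicit. Unset Printing Implicit Defensive.
Import Order.TTheory GRing.Theory Num.Theory.
Local Open Scope ring_scope.

Section G2.
Variable R : realType.

Definition vec := 'cV[R]_7.
Definition form3 := vec -> vec -> vec -> R.
Definition form4 := vec -> vec -> vec -> vec -> R.

Definition ix (k : nat) : 'I_7 := inord k.-1.

(* (dx^p /\ dx^q /\ dx^r)(u,v,w) in the coordinates x *)
Definition wedge3 (p q r : 'I_7) (u v w : vec) : R :=
  \det (\matrix_(i < 3, j < 3)
          (nth 0 [:: u; v; w] j) (nth ord0 [:: p; q; r] i) ord0).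

Definition d3 (a b c : nat) : vec -> vec -> vec -> R := wedge3 (ix a) (ix b) (ix c).

Definition phi_std : form3 := fun u v w =>
  d3 1 2 3 u v w - d3 1 6 7 u v w - d3 5 2 7 u v w - d3 5 6 3 u v w
  + d3 4 1 5 u v w + d3 4 2 6 u v w + d3 4 3 7 u v w.

(* P (invertible) expresses the coordinates x^1..x^7 at p in terms of the frame:
   x(u) = P u.  P is adapted to phi iff phi_p is the standard form in x. *)
Definition adapted (phi : form3) (P : 'M[R]_7) : Prop :=
  P \in unitmx /\ forall u v w, phi u v w = phi_std (P *m u) (P *m v) (P *m w).

Definition is_G2 (phi : form3) : Prop := exists P, adapted phi P.

(* metric g_ij in the frame: g(u,v) = (Pu).(Pv), i.e. matrix P^T P *)
Definition metric_mx (P : 'M[R]_7) : 'M[R]_7 := P^T *m P.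

Definition eps7 (t : 7.-tuple 'I_7) : R :=
  \det (\matrix_(r < 7, c < 7) ((tnth t r == c)%:R : R)).

(* Hodge star of a 3-form, computed in the oriented orthonormal coordinates x
   given by an adapted P (orientation = the one induced by phi):
   ( *al)_{d1d2d3d4} = 1/3! sum_{abc} al_{abc} eps_{abc d1d2d3d4}. *)
Definition hodge3 (P : 'M[R]_7) (al : form3) : form4 := fun u1 u2 u3 u4 =>
  let Q := invmx P in
  let ax (a b c : 'I_7) := al (Q *m delta_mx a ord0) (Q *m delta_mx b ord0)
                               (Q *m delta_mx c ord0) in
  \sum_(d1 < 7) \sum_(d2 < 7) \sum_(d3 < 7) \sum_(d4 < 7)
    ((6%:R)^-1 * \sum_(a < 7) \sum_(b < 7) \sum_(c < 7)
        ax a b c * eps7 [tuple a; b; c; d1; d2; d3; d4])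
    * (P *m u1) d1 ord0 * (P *m u2) d2 ord0 * (P *m u3) d3 ord0 * (P *m u4) d4 ord0.

Definition contr4 (w : vec) (psi : form4) : form3 := fun u v x => psi w u v x.

Definition add3 (a b : form3) : form3 := fun u v x => a u v x + b u v x.

End G2.

From HB Require Import structures.
From mathcomp Require Import all_boot all_order all_algebra.
From mathcomp Require Import reals exp.
From mathcomp Require Import ring lra.
Set Implicit Arguments. Unset Strict Implicit. Unset Printing Implicit Defensive.
Import Order.TTheory GRing.Theory Num.Theory.
Local Open Scope ring_scope.

(* In a frame adapted to [phi_o], [phi_o] is the standard form phi and
   [w _| *phi_o] is [W _| psi], with [W = P w] and psi = *phi.  The map
   T = al + be W W^T + ga (W x _) pulls phi back to [phi + W _| psi] as soon as
   al^3 - 3 al ga^2 |W|^2 = 1, 3 al^2 ga - ga^3 |W|^2 = 1 and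
   be (al^2 + ga^2 |W|^2) + 4 al ga^2 = 0; these are polynomial identities,
   checked on basis triples, and the cubic satisfied by ga / al has a root by
   the intermediate value theorem.  So [T P] is adapted to the new form, and its
   metric is [P^T (p + q W W^T) P] with p = (1 + |W|^2)^(1/3) and
   p + q (1 + |W|^2) = 0, whose inverse is [p^-1 (g_o^-1 + w w^T)].  Finally
   the metric does not depend on the adapted frame: a map preserving phi
   multiplies the covariant quartic det [[W x _, b], [-b^T, 0]]^2 =
   |W|^4 <b, W>^4 by det^2, hence is conformal, hence orthogonal. *)

Section SmallDeterminants.
Variable R : comNzRingType.

Lemma det_mx22 (A : 'M[R]_2) : \det A = A 0 0 * A 1 1 - A 0 1 * A 1 0.
Proof.
rewrite (expand_det_row _ 0) !big_ord_recl big_ord0 /cofactor !det_mx11 !mxE.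
set a := fun i j : nat => A (inord i) (inord j).
have aE i j : A i j = a i j by rewrite /a !inord_val.
by rewrite !aE /=; ring.
Qed.

Lemma det_mx33 (A : 'M[R]_3) : \det A =
  A 0 0 * A 1 1 * A 2 2 - A 0 0 * A 1 2 * A 2 1 - A 0 1 * A 1 0 * A 2 2
  + A 0 1 * A 1 2 * A 2 0 + A 0 2 * A 1 0 * A 2 1 - A 0 2 * A 1 1 * A 2 0.
Proof.
rewrite (expand_det_row _ 0) !big_ord_recl big_ord0 /cofactor !det_mx22 !mxE.
set a := fun i j : nat => A (inord i) (inord j).
have aE i j : A i j = a i j by rewrite /a !inord_val.
by rewrite !aE /=; ring.
Qed.

End SmallDeterminants.

(* The sign of [s] as a permutation of [0 .. size s - 1] (0 if [s] has a
   repetition), computed by Laplace expansion along the first row. *)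
Fixpoint seq_sign_rec (fuel : nat) (s : seq nat) : int :=
  match fuel, s with
  | fuel'.+1, a :: s' =>
      if a \in s' then 0 else (-1) ^+ a * seq_sign_rec fuel' (map (unbump a) s')
  | _, _ => 1
  end.

Definition seq_sign (s : seq nat) : int := seq_sign_rec (size s) s.

Lemma seq_sign_cons a s : seq_sign (a :: s) =
  if a \in s then 0 else (-1) ^+ a * seq_sign (map (unbump a) s).
Proof. by rewrite /seq_sign /= size_map. Qed.

Lemma det_mx_graph (R : comNzRingType) n (f : 'I_n -> 'I_n) :
  \det (\matrix_(i, j) ((f i == j)%:R : R)) =
  (seq_sign [seq (f i : nat) | i <- enum 'I_n])%:~R.
Proof.
elim: n f => [|n IH] f; first by rewrite det_mx00 enum_ord0.
rewrite (expand_det_row _ ord0) (bigD1 (f ord0)) //= big1 => [|j /negbTE fj]; last first.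
  by rewrite mxE eq_sym fj mul0r.
rewrite mxE eqxx mul1r addr0 /cofactor add0n enum_ordSl /= seq_sign_cons -map_comp.
case: ifP => [/mapP [i _ /= /val_inj fi]|f0_new].
  rewrite (expand_det_row _ i) big1 ?mulr0 // => j _.
  by rewrite !mxE -fi (negbTE (neq_lift _ _)) mul0r.
pose g (i : 'I_n) : 'I_n :=
  if unlift (f ord0) (f (lift ord0 i)) is Some j then j else i.
have liftg i : lift (f ord0) (g i) = f (lift ord0 i).
  rewrite /g; case: unliftP => [j -> //|fi].
  by move: f0_new; rewrite -fi (map_f (fun i => (f (lift ord0 i) : nat))) ?mem_enum.
have -> : row' ord0 (col' (f ord0) (\matrix_(i, j) ((f i == j)%:R : R)))
          = \matrix_(i, j) ((g i == j)%:R).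
  by apply/matrixP => i j; rewrite !mxE -liftg (inj_eq (@lift_inj _ _)).
rewrite IH.
have -> : [seq (g i : nat) | i <- enum 'I_n] =
          map (unbump (f ord0)) [seq ((f \o lift ord0) i : nat) | i <- enum 'I_n].
  by rewrite -map_comp; apply: eq_map => i /=; rewrite -liftg /= bumpK.
by rewrite rmorphM /= rmorphXn /= rmorphN1.
Qed.

Section CoordinateForms.
Variable R : comNzRingType.
Implicit Types x y z t : nat -> R.

Definition unit_coord (a k : nat) : R := (k == a)%:R.

(* Indices are 0-based: [minor3 x y z 0 1 2] is dx^123 evaluated at x, y, z. *)
Definition minor3 x y z (p q r : nat) : R :=
  x p * y q * z r - x p * y r * z q - x q * y p * z r + x q * y r * z p
  + x r * y p * z q - x r * y q * z p.

Definition minor4 x y z t (p q r s : nat) : R :=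
  x p * minor3 y z t q r s - x q * minor3 y z t p r s
  + x r * minor3 y z t p q s - x s * minor3 y z t p q r.

Definition phi_poly x y z : R :=
  minor3 x y z 0 1 2 - minor3 x y z 0 5 6 - minor3 x y z 4 1 6 - minor3 x y z 4 5 2
  + minor3 x y z 3 0 4 + minor3 x y z 3 1 5 + minor3 x y z 3 2 6.

(* The dual 4-form dx^4567 - dx^2345 + dx^1346 - dx^1247 - dx^2367 - dx^1357
   - dx^1256; that it is the Hodge dual of [phi_poly] is [hodge_dual_check]. *)
Definition psi_poly x y z t : R :=
  minor4 x y z t 3 4 5 6 - minor4 x y z t 1 2 3 4 + minor4 x y z t 0 2 3 5
  - minor4 x y z t 0 1 3 6 - minor4 x y z t 1 2 5 6 - minor4 x y z t 0 2 4 6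
  - minor4 x y z t 0 1 4 5.

Definition sqnorm x : R :=
  x 0 ^+ 2 + x 1 ^+ 2 + x 2 ^+ 2 + x 3 ^+ 2 + x 4 ^+ 2 + x 5 ^+ 2 + x 6 ^+ 2.

Lemma phi_poly_ext x x' y y' z z' :
  (forall k, (k < 7)%N -> x k = x' k) -> (forall k, (k < 7)%N -> y k = y' k) ->
  (forall k, (k < 7)%N -> z k = z' k) -> phi_poly x y z = phi_poly x' y' z'.
Proof. by move=> ex ey ez; rewrite /phi_poly /minor3 !ex ?ey ?ez. Qed.

Lemma psi_poly_ext x x' y y' z z' t t' :
  (forall k, (k < 7)%N -> x k = x' k) -> (forall k, (k < 7)%N -> y k = y' k) ->
  (forall k, (k < 7)%N -> z k = z' k) -> (forall k, (k < 7)%N -> t k = t' k) ->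
  psi_poly x y z t = psi_poly x' y' z' t'.
Proof. by move=> ex ey ez et; rewrite /psi_poly /minor4 /minor3 !ex ?ey ?ez ?et. Qed.

End CoordinateForms.
Arguments unit_coord {R} a k.

Section CoordinateFormsMorphism.
Variables (R S : comNzRingType) (f : {rmorphism R -> S}).
Implicit Types x y z t : nat -> R.

Lemma minor3_rmorph x y z p q r :
  f (minor3 x y z p q r) = minor3 (f \o x) (f \o y) (f \o z) p q r.
Proof. by rewrite /minor3 !(rmorphB, rmorphD, rmorphM). Qed.

Lemma minor4_rmorph x y z t p q r s :
  f (minor4 x y z t p q r s) = minor4 (f \o x) (f \o y) (f \o z) (f \o t) p q r s.
Proof. by rewrite /minor4 -!minor3_rmorph -!(rmorphB, rmorphD, rmorphM). Qed.

Lemma phi_poly_rmorph x y z : f (phi_poly x y z) = phi_poly (f \o x) (f \o y) (f \o z).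
Proof. by rewrite /phi_poly -!minor3_rmorph -!(rmorphB, rmorphD). Qed.

Lemma psi_poly_rmorph x y z t :
  f (psi_poly x y z t) = psi_poly (f \o x) (f \o y) (f \o z) (f \o t).
Proof. by rewrite /psi_poly -!minor4_rmorph -!(rmorphB, rmorphD). Qed.

End CoordinateFormsMorphism.

Definition sum7 (F : nat -> int) : int := foldr (fun i s => F i + s) 0 (iota 0 7).
Definition all7 (P : nat -> bool) : bool := all P (iota 0 7).

Lemma sum7E (F : nat -> int) : \sum_(a < 7) F a = sum7 F.
Proof. by rewrite !big_ord_recl big_ord0. Qed.

Lemma all7P (P : nat -> bool) : all7 P -> forall k, (k < 7)%N -> P k.
Proof. by move/allP=> allP7 k lt_k7; apply: allP7; rewrite mem_iota. Qed.

(* Testing the sign first restricts the evaluation of [phi_poly] to the six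
   permutations of the complement of [d1 d2 d3 d4]. *)
Lemma hodge_dual_check : all7 (fun d1 => all7 (fun d2 => all7 (fun d3 => all7 (fun d4 =>
  sum7 (fun a => sum7 (fun b => sum7 (fun c =>
    let s := seq_sign [:: a; b; c; d1; d2; d3; d4] in
    if s == 0 then 0 else phi_poly (unit_coord a) (unit_coord b) (unit_coord c) * s)))
  == 6 * psi_poly (unit_coord d1) (unit_coord d2) (unit_coord d3) (unit_coord d4))))).
Proof. by vm_compute. Qed.

Definition support7 (f : nat -> int) : seq (nat * int) :=
  [seq (m, f m) | m <- iota 0 7 & f m != 0].

(* Sparse forms of the linear forms [x |-> phi(x, e_a, e_k)] and
   [x |-> psi(x, e_a, e_b, e_c)], tabulated once and for all so that the
   case-by-case [ring] computations below only see their nonzero terms. *)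
Definition phi_table : seq (seq (seq (nat * int))) := Eval vm_compute in
  mkseq (fun a => mkseq (fun k =>
    support7 (fun m => phi_poly (unit_coord m) (unit_coord a) (unit_coord k))) 7) 7.

Definition psi_table : seq (seq (seq (seq (nat * int)))) := Eval vm_compute in
  mkseq (fun a => mkseq (fun b => mkseq (fun c =>
    support7 (fun m => psi_poly (unit_coord m) (unit_coord a) (unit_coord b) (unit_coord c)))
  7) 7) 7.

Definition phi_support (a k : nat) : seq (nat * int) :=
  nth [::] (nth [::] phi_table a) k.

Definition psi_support (a b c : nat) : seq (nat * int) :=
  nth [::] (nth [::] (nth [::] psi_table a) b) c.

Lemma phi_supportE (a k : nat) : (a < 7)%N -> (k < 7)%N ->
  phi_support a k = support7 (fun m => phi_poly (unit_coord m) (unit_coord a) (unit_coord k)).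
Proof.
move=> lt_a7 lt_k7; rewrite /phi_support.
have -> : phi_table = mkseq (fun a => mkseq (fun k =>
    support7 (fun m => phi_poly (unit_coord m) (unit_coord a) (unit_coord k))) 7) 7.
  by vm_compute.
by rewrite !nth_mkseq.
Qed.

Lemma psi_supportE (a b c : nat) : (a < 7)%N -> (b < 7)%N -> (c < 7)%N ->
  psi_support a b c =
  support7 (fun m => psi_poly (unit_coord m) (unit_coord a) (unit_coord b) (unit_coord c)).
Proof.
move=> lt_a7 lt_b7 lt_c7; rewrite /psi_support.
have -> : psi_table = mkseq (fun a => mkseq (fun b => mkseq (fun c =>
    support7 (fun m => psi_poly (unit_coord m) (unit_coord a) (unit_coord b) (unit_coord c)))
  7) 7) 7.
  by vm_compute.
by rewrite !nth_mkseq.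
Qed.

Section CoordinateIdentities.
Variable R : comNzRingType.
Implicit Types (x y z t : nat -> R) (k al be ga : R).

Lemma phi_poly_swap12 x y z : phi_poly y x z = - phi_poly x y z.
Proof. by rewrite /phi_poly /minor3; ring. Qed.

Lemma phi_poly_swap23 x y z : phi_poly x z y = - phi_poly x y z.
Proof. by rewrite /phi_poly /minor3; ring. Qed.

Lemma phi_poly_linear1 k x x' y z :
  phi_poly (fun i => k * x i + x' i) y z = k * phi_poly x y z + phi_poly x' y z.
Proof. by rewrite /phi_poly /minor3; ring. Qed.

Lemma phi_poly_linear2 k x y y' z :
  phi_poly x (fun i => k * y i + y' i) z = k * phi_poly x y z + phi_poly x y' z.
Proof. by rewrite /phi_poly /minor3; ring. Qed.

Lemma phi_poly_linear3 k x y z z' :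
  phi_poly x y (fun i => k * z i + z' i) = k * phi_poly x y z + phi_poly x y z'.
Proof. by rewrite /phi_poly /minor3; ring. Qed.

Lemma psi_poly_swap23 x y z t : psi_poly x z y t = - psi_poly x y z t.
Proof. by rewrite /psi_poly /minor4 /minor3; ring. Qed.

Lemma psi_poly_swap34 x y z t : psi_poly x y t z = - psi_poly x y z t.
Proof. by rewrite /psi_poly /minor4 /minor3; ring. Qed.

Lemma psi_poly_linear1 k x x' y z t :
  psi_poly (fun i => k * x i + x' i) y z t = k * psi_poly x y z t + psi_poly x' y z t.
Proof. by rewrite /psi_poly /minor4 /minor3; ring. Qed.

Lemma psi_poly_linear2 k x y y' z t :
  psi_poly x (fun i => k * y i + y' i) z t = k * psi_poly x y z t + psi_poly x y' z t.
Proof. by rewrite /psi_poly /minor4 /minor3; ring. Qed.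

Lemma psi_poly_linear3 k x y z z' t :
  psi_poly x y (fun i => k * z i + z' i) t = k * psi_poly x y z t + psi_poly x y z' t.
Proof. by rewrite /psi_poly /minor4 /minor3; ring. Qed.

Lemma psi_poly_linear4 k x y z t t' :
  psi_poly x y z (fun i => k * t i + t' i) = k * psi_poly x y z t + psi_poly x y z t'.
Proof. by rewrite /psi_poly /minor4 /minor3; ring. Qed.

Lemma phi_poly_expand1 x y z : phi_poly x y z = \sum_(m < 7) x m * phi_poly (unit_coord m) y z.
Proof. by rewrite !big_ord_recl big_ord0 /phi_poly /minor3 /unit_coord /=; ring. Qed.

Lemma psi_poly_expand1 x y z t :
  psi_poly x y z t = \sum_(m < 7) x m * psi_poly (unit_coord m) y z t.
Proof. by rewrite !big_ord_recl big_ord0 /psi_poly /minor4 /minor3 /unit_coord /=; ring. Qed.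

Lemma unit_coord_intr (a k : nat) : ((unit_coord a k : int)%:~R : R) = unit_coord a k.
Proof. exact: rmorph_nat. Qed.

Lemma phi_poly_unit_coord_int (a b c : nat) :
  phi_poly (unit_coord a) (unit_coord b) (unit_coord c) =
  (phi_poly (unit_coord a) (unit_coord b) (unit_coord c) : int)%:~R :> R.
Proof. by rewrite phi_poly_rmorph; apply: phi_poly_ext => k _ /=; rewrite unit_coord_intr. Qed.

Lemma psi_poly_unit_coord_int (a b c d : nat) :
  psi_poly (unit_coord a) (unit_coord b) (unit_coord c) (unit_coord d) =
  (psi_poly (unit_coord a) (unit_coord b) (unit_coord c) (unit_coord d) : int)%:~R :> R.
Proof. by rewrite psi_poly_rmorph; apply: psi_poly_ext => k _ /=; rewrite unit_coord_intr. Qed.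

Definition sparse_lin x (s : seq (nat * int)) : R :=
  foldr (fun p acc => x p.1 * (p.2)%:~R + acc) 0 s.

Lemma sum_sparse_lin x (f : nat -> int) :
  \sum_(m < 7) x m * (f m)%:~R = sparse_lin x (support7 f).
Proof.
rewrite -(big_mkord xpredT (fun m => x m * (f m)%:~R)) /index_iota subn0 /support7.
elim: (iota 0 7) => [|m s IH]; first by rewrite big_nil.
by rewrite big_cons IH /=; case: eqP => [->|]; rewrite ?mulr0 ?add0r.
Qed.

Lemma phi_poly_sparse x (a k : nat) : (a < 7)%N -> (k < 7)%N ->
  phi_poly x (unit_coord a) (unit_coord k) = sparse_lin x (phi_support a k).
Proof.
move=> lt_a7 lt_k7; rewrite phi_supportE // -sum_sparse_lin phi_poly_expand1.
by under eq_bigr do rewrite phi_poly_unit_coord_int.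
Qed.

Lemma psi_poly_sparse x (a b c : nat) : (a < 7)%N -> (b < 7)%N -> (c < 7)%N ->
  psi_poly x (unit_coord a) (unit_coord b) (unit_coord c) = sparse_lin x (psi_support a b c).
Proof.
move=> lt_a7 lt_b7 lt_c7; rewrite psi_supportE // -sum_sparse_lin psi_poly_expand1.
by under eq_bigr do rewrite psi_poly_unit_coord_int.
Qed.

Lemma phi_poly_cross_sq x (a c : nat) : (a < 7)%N -> (c < 7)%N ->
  \sum_(b < 7) phi_poly x (unit_coord a) (unit_coord b) * phi_poly x (unit_coord b) (unit_coord c)
  = x a * x c - unit_coord a c * sqnorm x.
Proof.
rewrite !big_ord_recl big_ord0 /=.
by case: a => [|[|[|[|[|[|[|a]]]]]]]; case: c => [|[|[|[|[|[|[|c]]]]]]] => //= _ _;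
  rewrite !phi_poly_sparse // /sparse_lin /phi_support /unit_coord /sqnorm /=; ring.
Qed.

Definition twist_column al be ga x (a k : nat) : R :=
  al * unit_coord a k + be * x k * x a + ga * phi_poly x (unit_coord a) (unit_coord k).

Definition wedge_cross x (a b c : nat) : R :=
  x a * phi_poly x (unit_coord b) (unit_coord c) - x b * phi_poly x (unit_coord a) (unit_coord c)
  + x c * phi_poly x (unit_coord a) (unit_coord b).

Lemma phi_poly_twist_column al be ga x (a b c : nat) : (a < b)%N -> (b < c)%N -> (c < 7)%N ->
  phi_poly (twist_column al be ga x a) (twist_column al be ga x b) (twist_column al be ga x c)
  = (al ^+ 3 - 3 * al * ga ^+ 2 * sqnorm x) * phi_poly (unit_coord a) (unit_coord b) (unit_coord c)
  + (3 * al ^+ 2 * ga - ga ^+ 3 * sqnorm x)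
    * psi_poly x (unit_coord a) (unit_coord b) (unit_coord c)
  + (be * (al ^+ 2 + ga ^+ 2 * sqnorm x) + 4 * al * ga ^+ 2) * wedge_cross x a b c.
Proof.
case: a => [|[|[|[|[|[|[|a]]]]]]]; case: b => [|[|[|[|[|[|[|b]]]]]]];
  case: c => [|[|[|[|[|[|[|c]]]]]]] => //= _ _ _;
  rewrite /wedge_cross psi_poly_sparse // /phi_poly /minor3 /twist_column !phi_poly_sparse //;
  rewrite /sparse_lin /phi_support /psi_support /unit_coord /sqnorm /=; ring.
Qed.

End CoordinateIdentities.

Section ColumnBasis.
Variables (R : comNzRingType) (n : nat).
Implicit Types (U V : 'cV[R]_n) (A : 'M[R]_n).

Definition basis (a : 'I_n) : 'cV[R]_n := delta_mx a 0.

Lemma sum_basis U : U = \sum_a U a 0 *: basis a.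
Proof.
apply/matrixP => i j; rewrite (ord1 j) summxE (bigD1 i) //= big1 => [|a /negbTE ai].
  by rewrite !mxE !eqxx mulr1 addr0.
by rewrite !mxE eq_sym ai mulr0.
Qed.

Lemma sum_mul_basis (F : 'I_n -> R) a : \sum_j F j * basis a j 0 = F a.
Proof.
rewrite (bigD1 a) //= big1 => [|j /negbTE ja]; first by rewrite !mxE !eqxx mulr1 addr0.
by rewrite !mxE ja mulr0.
Qed.

Lemma mx_entry_basis A a b : A a b = ((basis a)^T *m A *m basis b) 0 0.
Proof.
rewrite [RHS]mxE (eq_bigr (fun j => ((basis a)^T *m A) 0 j * basis b j 0)) //.
rewrite sum_mul_basis mxE (eq_bigr (fun i => A i b * basis a i 0)) ?sum_mul_basis //.
by move=> i _; rewrite mxE mulrC.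
Qed.

Lemma linear_expand (f : 'cV[R]_n -> R) :
  (forall k U U', f (k *: U + U') = k * f U + f U') ->
  forall U, f U = \sum_a U a 0 * f (basis a).
Proof.
move=> f_lin U; have f0 : f 0 = 0.
  have := f_lin 1 0 0; rewrite scaler0 addr0 mul1r => /eqP.
  by rewrite eq_sym -subr_eq0 addrK => /eqP.
rewrite {1}(sum_basis U).
by apply: (big_rec2 (fun s t => f t = s)) => [//|a y1 y2 _ IH]; rewrite f_lin IH.
Qed.

End ColumnBasis.
Arguments basis {R n} a.

Section TrilinearForms.
Variables (R : numFieldType) (n : nat).
Implicit Types U V X : 'cV[R]_n.

Definition trilinear (F : 'cV[R]_n -> 'cV[R]_n -> 'cV[R]_n -> R) :=
  [/\ forall k U U' V X, F (k *: U + U') V X = k * F U V X + F U' V X,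
      forall k U V V' X, F U (k *: V + V') X = k * F U V X + F U V' X &
      forall k U V X X', F U V (k *: X + X') = k * F U V X + F U V X'].

Definition alternating3 (F : 'cV[R]_n -> 'cV[R]_n -> 'cV[R]_n -> R) :=
  (forall U V X, F V U X = - F U V X) /\ (forall U V X, F U X V = - F U V X).

Lemma trilinear_mulmx F (A : 'M[R]_n) : trilinear F ->
  trilinear (fun U V X => F (A *m U) (A *m V) (A *m X)).
Proof. by case=> F1 F2 F3; split=> *; rewrite mulmxDr -scalemxAr ?F1 ?F2 ?F3. Qed.

Lemma trilinearB F G : trilinear F -> trilinear G ->
  trilinear (fun U V X => F U V X - G U V X).
Proof. by case=> F1 F2 F3 [G1 G2 G3]; split=> *; rewrite ?F1 ?F2 ?F3 ?G1 ?G2 ?G3; ring. Qed.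

Lemma alternating3_mulmx F (A : 'M[R]_n) : alternating3 F ->
  alternating3 (fun U V X => F (A *m U) (A *m V) (A *m X)).
Proof. by case=> F12 F23; split=> U V X; [apply: F12 | apply: F23]. Qed.

Lemma alternating3B F G : alternating3 F -> alternating3 G ->
  alternating3 (fun U V X => F U V X - G U V X).
Proof.
by case=> F12 F23 [G12 G23]; split=> U V X;
  [rewrite F12 G12 | rewrite F23 G23]; rewrite opprD.
Qed.

Lemma trilinear_expand F : trilinear F -> forall U V X,
  F U V X = \sum_a \sum_b \sum_c U a 0 * V b 0 * X c 0 * F (basis a) (basis b) (basis c).
Proof.
move=> [F1 F2 F3] U V X.
rewrite (linear_expand (f := fun U => F U V X)) //; apply: eq_bigr => a _.
rewrite (linear_expand (f := fun V => F (basis a) V X)) // mulr_sumr; apply: eq_bigr => b _.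
rewrite (linear_expand (f := F (basis a) (basis b))) // !mulr_sumr; apply: eq_bigr => c _.
by rewrite !mulrA.
Qed.

Lemma alternating3_basis_eq0 (G : 'I_n -> 'I_n -> 'I_n -> R) :
  (forall a b c, G b a c = - G a b c) -> (forall a b c, G a c b = - G a b c) ->
  (forall a b c : 'I_n, (a < b)%N -> (b < c)%N -> G a b c = 0) ->
  forall a b c, G a b c = 0.
Proof.
move=> G12 G23 G_sorted.
have G_diag a c : G a a c = 0 by apply/eqP; rewrite -eqNr -G12.
have G_diag' a b : G a b b = 0 by apply/eqP; rewrite -eqNr -G23.
have G_diag'' a b : G a b a = 0 by rewrite G23 G_diag oppr0.
move=> a b c.
case: (ltngtP a b) => [ab|ba|/val_inj ->]; last exact: G_diag.
- case: (ltngtP b c) => [bc|cb|/val_inj ->]; last exact: G_diag'.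
  + exact: G_sorted.
  + case: (ltngtP a c) => [ac|ca|/val_inj ->]; last exact: G_diag''.
    * by rewrite G23 (G_sorted a c b) ?oppr0.
    * by rewrite G23 -G12 (G_sorted c a b).
- case: (ltngtP b c) => [bc|cb|/val_inj ->]; last exact: G_diag'.
  + case: (ltngtP a c) => [ac|ca|/val_inj ->]; last exact: G_diag''.
    * by rewrite G12 (G_sorted b a c) ?oppr0.
    * by rewrite G12 -G23 (G_sorted b c a).
  + by rewrite G12 -G23 G12 (G_sorted c b a) ?oppr0.
Qed.

Lemma trilinear_alternating_eq0 F : trilinear F -> alternating3 F ->
  (forall a b c : 'I_n, (a < b)%N -> (b < c)%N -> F (basis a) (basis b) (basis c) = 0) ->
  forall U V X, F U V X = 0.
Proof.
move=> F_lin [F12 F23] F_sorted U V X.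
have F_basis := alternating3_basis_eq0 (fun a b c => F12 _ _ _) (fun a b c => F23 _ _ _) F_sorted.
rewrite (trilinear_expand F_lin); do 3!(apply: big1 => ? _).
by rewrite F_basis mulr0.
Qed.

End TrilinearForms.

Section StandardForms.
Variable R : realType.
Local Notation vec := (vec R).
Implicit Types (U V X : vec) (a b c : 'I_7).

(* [xcoord X k] is the coordinate x^(k+1) of [X]; it is junk for [k >= 7]
   ([inord] defaults to 0), whence the [k < 7] side conditions below. *)
Definition xcoord (X : vec) (k : nat) : R := X (inord k) 0.

Definition psi_std (X1 X2 X3 X4 : vec) : R :=
  psi_poly (xcoord X1) (xcoord X2) (xcoord X3) (xcoord X4).

Lemma xcoord_ord X (i : 'I_7) : xcoord X i = X i 0.
Proof. by rewrite /xcoord inord_val. Qed.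

Lemma xcoord_basis a k : (k < 7)%N -> xcoord (basis a) k = unit_coord a k.
Proof.
move=> lt_k7; rewrite /xcoord mxE eqxx andbT /unit_coord; congr (_%:R).
by rewrite -val_eqE /= inordK.
Qed.

Lemma xcoord_linear k U U' : xcoord (k *: U + U') =1 (fun i => k * xcoord U i + xcoord U' i).
Proof. by move=> i; rewrite /xcoord !mxE. Qed.

Lemma phi_stdE U V X : phi_std U V X = phi_poly (xcoord U) (xcoord V) (xcoord X).
Proof. by rewrite /phi_std /d3 /wedge3 !det_mx33 !mxE /phi_poly /minor3 /xcoord /ix /=; ring. Qed.

Lemma phi_std_basis a b c :
  phi_std (basis a) (basis b) (basis c) =
  phi_poly (unit_coord a) (unit_coord b) (unit_coord c) :> R.
Proof. by rewrite phi_stdE; apply: phi_poly_ext => k; apply: xcoord_basis. Qed.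

Lemma psi_std_basis X a b c :
  psi_std X (basis a) (basis b) (basis c) =
  psi_poly (xcoord X) (unit_coord a) (unit_coord b) (unit_coord c).
Proof. by apply: psi_poly_ext => // k; apply: xcoord_basis. Qed.

Lemma phi_std_alternating : alternating3 (@phi_std R).
Proof.
by split=> U V X; rewrite !phi_stdE; [apply: phi_poly_swap12 | apply: phi_poly_swap23].
Qed.

Lemma phi_std_trilinear : trilinear (@phi_std R).
Proof.
split=> k *; rewrite !phi_stdE.
- by rewrite -phi_poly_linear1; apply: phi_poly_ext => // i _; apply: xcoord_linear.
- by rewrite -phi_poly_linear2; apply: phi_poly_ext => // i _; apply: xcoord_linear.
- by rewrite -phi_poly_linear3; apply: phi_poly_ext => // i _; apply: xcoord_linear.
Qed.

Lemma psi_std_linear1 V X Y k U U' :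
  psi_std (k *: U + U') V X Y = k * psi_std U V X Y + psi_std U' V X Y.
Proof.
by rewrite /psi_std -psi_poly_linear1; apply: psi_poly_ext => // i _; apply: xcoord_linear.
Qed.

Lemma psi_std_trilinear W : trilinear (psi_std W).
Proof.
split=> k *; rewrite /psi_std.
- by rewrite -psi_poly_linear2; apply: psi_poly_ext => // i _; apply: xcoord_linear.
- by rewrite -psi_poly_linear3; apply: psi_poly_ext => // i _; apply: xcoord_linear.
- by rewrite -psi_poly_linear4; apply: psi_poly_ext => // i _; apply: xcoord_linear.
Qed.

Lemma psi_std_alternating W : alternating3 (psi_std W).
Proof. by split=> U V X; rewrite /psi_std; [apply: psi_poly_swap23 | apply: psi_poly_swap34]. Qed.

End StandardForms.

Section HodgeDual.
Variable R : realType.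
Local Notation vec := (vec R).
Implicit Types (X : vec) (a b c : 'I_7).

Lemma eps7E (t : 7.-tuple 'I_7) : eps7 R t = (seq_sign (map (@nat_of_ord 7) t))%:~R.
Proof. by rewrite /eps7 det_mx_graph -[in RHS](map_tnth_enum t) -map_comp. Qed.

Lemma hodge_coef (d1 d2 d3 d4 : 'I_7) :
  6^-1 * (\sum_a \sum_b \sum_c phi_std (basis a) (basis b) (basis c)
                                * eps7 R [tuple a; b; c; d1; d2; d3; d4])
  = psi_std (basis d1) (basis d2) (basis d3) (basis d4).
Proof.
have := all7P hodge_dual_check (ltn_ord d1) => /all7P /(_ _ (ltn_ord d2))
  /all7P /(_ _ (ltn_ord d3)) /all7P /(_ _ (ltn_ord d4)) /eqP dual.
set S := (X in 6^-1 * X).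
have -> : S = (6 * psi_poly (unit_coord d1) (unit_coord d2) (unit_coord d3) (unit_coord d4)
               : int)%:~R.
  rewrite -dual -sum7E rmorph_sum; apply: eq_bigr => a _.
  rewrite -sum7E rmorph_sum; apply: eq_bigr => b _.
  rewrite -sum7E rmorph_sum; apply: eq_bigr => c _.
  rewrite phi_std_basis phi_poly_unit_coord_int eps7E /=.
  by case: eqP => [->|_]; rewrite ?rmorph0 ?mulr0 // rmorphM.
rewrite rmorphM /= rmorph_nat -psi_poly_unit_coord_int mulrA mulVf ?mul1r ?pnatr_eq0 //.
by apply: psi_poly_ext => k lt_k7; rewrite xcoord_basis.
Qed.

Lemma psi_std_expand X1 X2 X3 X4 : psi_std X1 X2 X3 X4 =
  \sum_d1 \sum_d2 \sum_d3 \sum_d4 psi_std (basis d1) (basis d2) (basis d3) (basis d4)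
    * X1 d1 0 * X2 d2 0 * X3 d3 0 * X4 d4 0.
Proof.
rewrite (linear_expand (f := fun X => psi_std X X2 X3 X4)); last exact: psi_std_linear1.
apply: eq_bigr => d1 _; have [psi2 psi3 psi4] := @psi_std_trilinear R (basis d1).
rewrite (linear_expand (f := fun X => psi_std (basis d1) X X3 X4)) // mulr_sumr.
apply: eq_bigr => d2 _.
rewrite (linear_expand (f := fun X => psi_std (basis d1) (basis d2) X X4)) // !mulr_sumr.
apply: eq_bigr => d3 _.
rewrite (linear_expand (f := psi_std (basis d1) (basis d2) (basis d3))) // !mulr_sumr.
by apply: eq_bigr => d4 _; ring.
Qed.

Lemma hodge3_adapted (phi : form3 R) (P : 'M[R]_7) (u1 u2 u3 u4 : vec) : adapted phi P ->
  hodge3 P phi u1 u2 u3 u4 = psi_std (P *m u1) (P *m u2) (P *m u3) (P *m u4).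
Proof.
move=> [P_unit phiE]; rewrite psi_std_expand /hodge3.
apply: eq_bigr => d1 _; apply: eq_bigr => d2 _; apply: eq_bigr => d3 _.
apply: eq_bigr => d4 _; congr (_ * _ * _ * _ * _); rewrite -hodge_coef.
congr (_ * _); apply: eq_bigr => a _; apply: eq_bigr => b _; apply: eq_bigr => c _.
by rewrite phiE !mulmxA mulmxV // !mul1mx.
Qed.

End HodgeDual.

Section CrossProduct.
Variable R : realType.
Local Notation vec := (vec R).
Implicit Types (U V W : vec).

Definition cross_mx W : 'M[R]_7 := \matrix_(a, b) phi_std W (basis a) (basis b).

Definition norm2 W : R := (W^T *m W) 0 0.

Lemma cross_mxE W (a b : 'I_7) :
  cross_mx W a b = phi_poly (xcoord W) (unit_coord a) (unit_coord b).
Proof. by rewrite mxE phi_stdE; apply: phi_poly_ext => // k lt_k7; rewrite xcoord_basis. Qed.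

Lemma norm2E W : norm2 W = sqnorm (xcoord W).
Proof. by rewrite /norm2 mxE !big_ord_recl big_ord0 /= !mxE -!xcoord_ord /sqnorm; ring. Qed.

Lemma norm2_ge0 W : 0 <= norm2 W.
Proof. by rewrite /norm2 mxE sumr_ge0 // => i _; rewrite mxE -expr2 sqr_ge0. Qed.

Lemma norm2_eq0 W : norm2 W = 0 -> W = 0.
Proof.
rewrite /norm2 mxE => /psumr_eq0P W0.
have {}W0 k : W^T 0 k * W k 0 = 0 by apply: W0 => // l _; rewrite mxE -expr2 sqr_ge0.
apply/matrixP => i j; rewrite (ord1 j) mxE.
by have := W0 i; rewrite mxE -expr2 => /eqP; rewrite sqrf_eq0 => /eqP.
Qed.

Lemma phi_std_bilinear W U V : phi_std W U V = (U^T *m cross_mx W *m V) 0 0.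
Proof.
have [_ phi2 phi3] := phi_std_trilinear R.
rewrite (linear_expand (f := fun U => phi_std W U V)) //.
under eq_bigr => a _ do rewrite (linear_expand (f := phi_std W (basis a))) // mulr_sumr.
rewrite exchange_big mxE; apply: eq_bigr => b _; rewrite mxE mulr_suml.
by apply: eq_bigr => a _; rewrite !mxE; ring.
Qed.

Lemma cross_mx_skew W : (cross_mx W)^T = - cross_mx W.
Proof.
have [_ phi23] := phi_std_alternating R.
by apply/matrixP => a b; rewrite !mxE phi23.
Qed.

Lemma cross_mx_self W : cross_mx W *m W = 0.
Proof.
have [_ _ phi3] := phi_std_trilinear R; have [phi12 phi23] := phi_std_alternating R.
apply/matrixP => a j; rewrite (ord1 j) !mxE.
have WW : phi_std W W (basis a) = 0 by apply/eqP; rewrite -eqNr -phi12.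
have Wa0 : phi_std W (basis a) W = 0 by rewrite phi23 WW oppr0.
rewrite -[RHS]Wa0 (linear_expand (f := phi_std W (basis a))) //.
by apply: eq_bigr => b _; rewrite mxE mulrC.
Qed.

Lemma cross_mx_sq W : cross_mx W *m cross_mx W = W *m W^T - (norm2 W)%:M.
Proof.
apply/matrixP => a c; rewrite !mxE norm2E.
under eq_bigr do rewrite !cross_mxE.
rewrite (phi_poly_cross_sq (xcoord W) (ltn_ord a) (ltn_ord c)) big_ord1 !mxE -!xcoord_ord.
by rewrite /unit_coord mulr_natl eq_sym.
Qed.

Definition phi_preserving (M : 'M[R]_7) :=
  forall U V X, phi_std (M *m U) (M *m V) (M *m X) = phi_std U V X.

Lemma cross_mx_covariant (M : 'M[R]_7) : phi_preserving M ->
  forall W, M^T *m cross_mx (M *m W) *m M = cross_mx W.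
Proof.
move=> M_stab W; apply/matrixP => a b.
by rewrite mx_entry_basis [in RHS]mxE -M_stab phi_std_bilinear trmx_mul !mulmxA.
Qed.

End CrossProduct.

Section TwistedFrame.
Variable R : realType.
Local Notation vec := (vec R).
Implicit Types (U V X W : vec) (al be ga : R).

(* [twist_mx al be ga W] is [u |-> al u + be <W, u> W + ga (W x u)]. *)
Definition twist_mx al be ga W : 'M[R]_7 :=
  al%:M + be *: (W *m W^T) + ga *: (cross_mx W)^T.

Definition twist_params al be ga (n : R) : Prop :=
  [/\ al ^+ 3 - 3 * al * ga ^+ 2 * n = 1, 3 * al ^+ 2 * ga - ga ^+ 3 * n = 1
    & be * (al ^+ 2 + ga ^+ 2 * n) + 4 * al * ga ^+ 2 = 0].

Lemma xcoord_twist_basis al be ga W (a : 'I_7) k : (k < 7)%N ->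
  xcoord (twist_mx al be ga W *m basis a) k = twist_column al be ga (xcoord W) a k.
Proof.
move=> lt_k7; rewrite {1}/xcoord mxE sum_mul_basis !mxE big_ord1 !mxE phi_stdE.
rewrite /twist_column -(xcoord_ord W a) mulrA; congr (_ + _ + _ * _).
  by rewrite /unit_coord mulr_natr -val_eqE /= inordK.
by apply: phi_poly_ext => // l lt_l7; rewrite !xcoord_basis // /unit_coord inordK.
Qed.

Section FixedTwist.
Variables (al be ga : R) (W : vec).
Local Notation T := (twist_mx al be ga W).
Local Notation n := (norm2 W).

Lemma twist_pullback_basis (a b c : 'I_7) : (a < b)%N -> (b < c)%N ->
  phi_std (T *m basis a) (T *m basis b) (T *m basis c) =
    (al ^+ 3 - 3 * al * ga ^+ 2 * n) * phi_std (basis a) (basis b) (basis c)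
  + (3 * al ^+ 2 * ga - ga ^+ 3 * n) * psi_std W (basis a) (basis b) (basis c)
  + (be * (al ^+ 2 + ga ^+ 2 * n) + 4 * al * ga ^+ 2) * wedge_cross (xcoord W) a b c.
Proof.
move=> ab bc; rewrite phi_stdE phi_std_basis psi_std_basis norm2E -phi_poly_twist_column //.
by apply: phi_poly_ext => k lt_k7; apply: xcoord_twist_basis.
Qed.

Lemma twist_pullback : twist_params al be ga n ->
  forall U V X, phi_std (T *m U) (T *m V) (T *m X) = phi_std U V X + psi_std W U V X.
Proof.
move=> [c1 c2 c3] U V X; apply/eqP; rewrite -subr_eq0 opprD addrA; apply/eqP.
move: U V X; apply: (trilinear_alternating_eq0 (F := fun U V X =>
  phi_std (T *m U) (T *m V) (T *m X) - phi_std U V X - psi_std W U V X)).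
- apply: trilinearB; last exact: psi_std_trilinear.
  by apply: trilinearB; [apply: trilinear_mulmx | ]; apply: phi_std_trilinear.
- apply: alternating3B; last exact: psi_std_alternating.
  by apply: alternating3B; [apply: alternating3_mulmx | ]; apply: phi_std_alternating.
- by move=> a b c ab bc; rewrite twist_pullback_basis // c1 c2 c3; ring.
Qed.

Lemma twist_gram : T^T *m T =
  (al ^+ 2 + ga ^+ 2 * n) *: 1%:M + (2 * al * be + be ^+ 2 * n - ga ^+ 2) *: (W *m W^T).
Proof.
set P := W *m W^T; set C := cross_mx W.
have PP : P *m P = n *: P.
  by rewrite mulmxA -(mulmxA W) [W^T *m W]mx11_scalar mul_mx_scalar -scalemxAl.
have CP : C *m P = 0 by rewrite /P mulmxA cross_mx_self mul0mx.
have PC : P *m C = 0.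
  by rewrite /P -mulmxA -[W^T *m C]trmxK trmx_mul trmxK cross_mx_skew mulNmx
    cross_mx_self oppr0 trmx0 mulmx0.
have -> : T^T = al%:M + be *: P + ga *: C.
  by rewrite /twist_mx !linearD /= !linearZ /= tr_scalar_mx trmx_mul trmxK trmxK.
rewrite /twist_mx cross_mx_skew -/C -/P.
rewrite !(mulmxDl, mulmxDr) -!(scalemxAl, scalemxAr) !(mul_scalar_mx, mul_mx_scalar).
rewrite !(mulmxN, mulNmx) PP CP PC cross_mx_sq -/P.
by apply/matrixP => i j; rewrite !mxE; ring.
Qed.

End FixedTwist.

End TwistedFrame.

Section RankOneDeterminant.
Variable R : fieldType.

Lemma det_1_sub_rank1 m (x y : 'cV[R]_m) : \det (1%:M - x *m y^T) = 1 - (y^T *m x) 0 0.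
Proof.
pose B : 'M[R]_(m + 1) := block_mx 1%:M x y^T 1%:M.
have B_lower : B = block_mx 1%:M 0 y^T 1%:M *m block_mx 1%:M x 0 (1%:M - y^T *m x).
  by rewrite mulmx_block ?mul1mx ?mulmx1 ?mul0mx ?mulmx0 ?addr0 ?add0r addrC subrK.
have B_upper : B = block_mx (1%:M - x *m y^T) x 0 1%:M *m block_mx 1%:M 0 y^T 1%:M.
  by rewrite mulmx_block ?mul1mx ?mulmx1 ?mul0mx ?mulmx0 ?addr0 ?add0r subrK.
have := B_upper; rewrite B_lower => /(congr1 determinant).
rewrite !det_mulmx !det_lblock !det_ublock !det1 !mul1r ?mulr1 det_mx11.
by rewrite !mxE eqxx /= => <-.
Qed.

Lemma det_scalar_sub_rank1 m (c : R) (x y : 'cV[R]_m.+1) : c != 0 ->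
  \det (c%:M - x *m y^T) = c ^+ m.+1 - c ^+ m * (y^T *m x) 0 0.
Proof.
move=> c0; have -> : c%:M - x *m y^T = c *: (1%:M - (c^-1 *: x) *m y^T).
  by rewrite scalerBr -scalemxAl scalerA mulfV // scale1r scalemx1.
rewrite detZ det_1_sub_rank1 -scalemxAr mxE mulrBr mulr1; congr (_ - _).
by rewrite exprSr -mulrA (mulrA c) mulfV // mul1r.
Qed.

End RankOneDeterminant.

Lemma sym_mx_quadratic_eq0 (R : numFieldType) n (S : 'M[R]_n) : S^T = S ->
  (forall u : 'cV[R]_n, (u^T *m S *m u) 0 0 = 0) -> S = 0.
Proof.
move=> S_sym S_quad.
have polar x y : (y^T *m S *m x) 0 0 = (x^T *m S *m y) 0 0.
  have -> : (y^T *m S *m x) 0 0 = ((y^T *m S *m x)^T) 0 0 by rewrite [RHS]mxE.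
  by rewrite !trmx_mul trmxK S_sym mulmxA.
have addE (A B : 'M[R]_1) : (A + B) 0 0 = A 0 0 + B 0 0 by rewrite mxE.
apply/matrixP => a b; rewrite mx_entry_basis [RHS]mxE.
have := S_quad (basis a + basis b).
rewrite [(_ + _)^T]linearD /= !mulmxDl !mulmxDr !addE !S_quad add0r addr0 polar.
by rewrite -mulr2n -mulr_natr => /eqP; rewrite mulf_eq0 pnatr_eq0 orbF => /eqP.
Qed.

Section PreservingMatricesAreOrthogonal.
Variable R : realType.
Local Notation vec := (vec R).
Implicit Types (u v b : vec) (M : 'M[R]_7).

Definition bordered (C : 'M[R]_7) b : 'M[R]_(7 + 1) := block_mx C b (- b^T) 0.

Lemma dot_sym u v : (u^T *m v) 0 0 = (v^T *m u) 0 0.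
Proof. by rewrite !mxE; apply: eq_bigr => i _; rewrite !mxE mulrC. Qed.

Lemma bordered_mul v b :
  bordered (cross_mx v) b *m block_mx (- cross_mx v) v (- v^T) 0 =
  block_mx ((norm2 v)%:M - (v + b) *m v^T) 0 (b^T *m cross_mx v) (- (b^T *m v)).
Proof.
rewrite /bordered mulmx_block cross_mx_self ?mulmx0 ?mul0mx ?addr0 !mulmxN !mulNmx opprK.
by rewrite cross_mx_sq mulmxDl opprB opprD addrA.
Qed.

Lemma det_bordered_dual v :
  \det (block_mx (- cross_mx v) v (- v^T) 0) = \det (bordered (cross_mx v) v).
Proof.
pose D : 'M[R]_(7 + 1) := block_mx 1%:M 0 0 (- 1%:M).
have -> : block_mx (- cross_mx v) v (- v^T) 0 = D *m (bordered (cross_mx v) v)^T *m D.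
  rewrite /bordered tr_block_mx cross_mx_skew trmx0 linearN /= trmxK /D !mulmx_block.
  by rewrite ?mul1mx ?mulmx1 ?mul0mx ?mulmx0 ?addr0 ?add0r ?mulmxN ?mulNmx ?mulmx1 ?opprK
    ?mul1mx ?oppr0.
rewrite !det_mulmx det_tr /D det_ublock det1 mul1r det_mx11 !mxE /=.
by rewrite mulN1r mulrN1 opprK.
Qed.

Lemma det_bordered_mul v b : norm2 v != 0 ->
  \det (bordered (cross_mx v) b) * \det (bordered (cross_mx v) v) =
  norm2 v ^+ 6 * ((b^T *m v) 0 0) ^+ 2.
Proof.
move=> v0; rewrite -det_bordered_dual -det_mulmx bordered_mul det_lblock.
have vvb : (v^T *m (v + b)) 0 0 = norm2 v + (b^T *m v) 0 0.
  by rewrite mulmxDr [LHS]mxE dot_sym.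
have Nbv : (- (b^T *m v)) 0 0 = - (b^T *m v) 0 0 by rewrite mxE.
by rewrite det_scalar_sub_rank1 // det_mx11 vvb Nbv; ring.
Qed.

(* The determinant of the bordered cross product matrix is a covariant
   quartic in [v]; this is what forces a [phi]-preserving map to be conformal. *)
Lemma det_bordered_sq v b : norm2 v != 0 ->
  \det (bordered (cross_mx v) b) ^+ 2 = norm2 v ^+ 4 * ((b^T *m v) 0 0) ^+ 4.
Proof.
move=> v0; have vb := det_bordered_mul b v0; have vv := det_bordered_mul v v0.
rewrite -/(norm2 v) in vv.
have vv2 : \det (bordered (cross_mx v) v) ^+ 2 = norm2 v ^+ 8 by rewrite expr2 vv; ring.
by apply: (mulIf (expf_neq0 8 v0)); rewrite -{1}vv2 -exprMn vb; ring.
Qed.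

Lemma det_bordered_covariant M : M \in unitmx -> phi_preserving M ->
  forall u b, \det (bordered (cross_mx u) b) =
              \det M ^+ 2 * \det (bordered (cross_mx (M *m u)) (invmx M^T *m b)).
Proof.
move=> M_unit M_pres u b.
pose E : 'M[R]_(7 + 1) := block_mx M 0 0 1%:M.
have Mt_unit : M^T \in unitmx by rewrite unitmx_tr.
have -> : bordered (cross_mx u) b =
          E^T *m bordered (cross_mx (M *m u)) (invmx M^T *m b) *m E.
  rewrite /bordered /E tr_block_mx !trmx0 trmx1 !mulmx_block.
  rewrite ?mul1mx ?mulmx1 ?mul0mx ?mulmx0 ?addr0 ?add0r (cross_mx_covariant M_pres).
  by rewrite mulmxA mulmxV // mul1mx ?mulNmx trmx_mul trmx_inv trmxK -mulmxA mulVmx // mulmx1.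
by rewrite !det_mulmx det_tr /E det_ublock det1 mulr1; ring.
Qed.

Lemma phi_preserving_norm2 M : M \in unitmx -> phi_preserving M ->
  forall u, norm2 u = `|\det M| * norm2 (M *m u).
Proof.
move=> M_unit M_pres u.
have detM0 : \det M != 0 by rewrite -unitfE -unitmxE.
have [u0|u_neq0] := eqVneq (norm2 u) 0.
  by rewrite u0 (norm2_eq0 u0) mulmx0 /norm2 trmx0 mul0mx mxE mulr0.
have Mu_neq0 : norm2 (M *m u) != 0.
  apply: contra u_neq0 => /eqP /norm2_eq0 Mu0.
  by rewrite -[u]mul1mx -(mulVmx M_unit) -mulmxA Mu0 mulmx0 /norm2 trmx0 mul0mx mxE.
have dual_u : ((invmx M^T *m u)^T *m (M *m u)) 0 0 = norm2 u.
  by rewrite trmx_mul trmx_inv trmxK !mulmxA -[_ *m invmx M *m M]mulmxA mulVmx // mulmx1.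
have := congr1 (fun x => x ^+ 2) (det_bordered_covariant M_unit M_pres u u) => /=.
rewrite exprMn det_bordered_sq // det_bordered_sq // dual_u -exprM -/(norm2 u).
rewrite exprM -(real_normK (num_real (\det M))) -exprM [RHS]mulrA.
move=> eq4; move: (mulIf (expf_neq0 4 u_neq0) eq4) => /eqP.
by rewrite -exprMn eqrXn2 ?mulr_ge0 ?normr_ge0 ?norm2_ge0 // => /eqP.
Qed.

Lemma phi_preserving_orthogonal M : M \in unitmx -> phi_preserving M -> M^T *m M = 1%:M.
Proof.
move=> M_unit M_pres; set d := `|\det M|.
have d_gt0 : 0 < d by rewrite normr_gt0 -unitfE -unitmxE.
have d2 : d ^+ 2 = \det M ^+ 2 by rewrite real_normK ?num_real.
have conformal : d *: (M^T *m M) - 1%:M = 0.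
  apply: sym_mx_quadratic_eq0 => [|u].
    by rewrite linearB /= linearZ /= trmx_mul trmxK trmx1.
  have entryE (A B : 'M[R]_1) : (d *: A - B) 0 0 = d * A 0 0 - B 0 0 by rewrite !mxE.
  rewrite mulmxBr mulmxBl mulmx1 -scalemxAr -scalemxAl entryE.
  by rewrite -/(norm2 u) (phi_preserving_norm2 M_unit M_pres u) /norm2 trmx_mul !mulmxA subrr.
have MtM : M^T *m M = d^-1 *: 1%:M.
  by move/eqP: conformal; rewrite subr_eq0 => /eqP <-; rewrite scalerA mulVf ?gt_eqF // scale1r.
suff d1 : d = 1 by rewrite MtM d1 invr1 scale1r.
have := congr1 determinant MtM; rewrite det_mulmx det_tr detZ det1 mulr1 -expr2 -d2.
move=> /(congr1 (fun x => x * d ^+ 7)); rewrite -exprMn mulVf ?gt_eqF // expr1n -exprD.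
by move/eqP; rewrite pexpr_eq1 ?ltW // => /eqP.
Qed.

Lemma adapted_metric_unique (phi : form3 R) (P Q : 'M[R]_7) :
  adapted phi P -> adapted phi Q -> metric_mx Q = metric_mx P.
Proof.
move=> [P_unit phiPE] [Q_unit phiQE]; set M := Q *m invmx P.
have M_unit : M \in unitmx by rewrite unitmx_mul Q_unit unitmx_inv.
have M_pres : phi_preserving M.
  by move=> U V X; rewrite /M -!mulmxA -phiQE phiPE !(mulKVmx P_unit).
have -> : Q = M *m P by rewrite /M mulmxKV.
rewrite /metric_mx trmx_mul -mulmxA (mulmxA M^T).
by rewrite (phi_preserving_orthogonal M_unit M_pres) mul1mx.
Qed.

End PreservingMatricesAreOrthogonal.

Section TwistParameters.
Variable R : realType.
Implicit Types (n al be ga : R).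

Lemma powR_inv3K (a : R) : 0 <= a -> (a `^ 3^-1) ^+ 3 = a.
Proof.
move=> a_ge0; rewrite -powR_mulrn ?powR_ge0 // -powRrM mulVf ?pnatr_eq0 //.
by rewrite powRr1.
Qed.

(* The ratio [k = ga / al] of a solution is a root of this cubic. *)
Lemma twist_ratio_exists n : 0 <= n ->
  exists2 k, 1 - 3 * k - 3 * n * k ^+ 2 + n * k ^+ 3 = 0 & 0 < 1 - 3 * k ^+ 2 * n.
Proof.
move=> n_ge0; pose s := Num.sqrt (3 * n + 9).
have s2 : s ^+ 2 = 3 * n + 9 by rewrite sqr_sqrtr // addr_ge0 ?mulr_ge0.
have s_ge3 : 3 <= s.
  by rewrite -(@ler_pXn2r _ 2) ?nnegrE ?sqrtr_ge0 // s2 expr2; lra.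
have s_gt0 : 0 < s by apply: lt_le_trans s_ge3.
pose f : {poly R} := (3 * n)%:P * 'X^2 + 3%:P * 'X - n%:P * 'X^3 - 1.
have fE k : f.[k] = 3 * k + 3 * n * k ^+ 2 - n * k ^+ 3 - 1 by rewrite /f !hornerE; ring.
have f_inv_s : 0 <= f.[s^-1].
  have -> : f.[s^-1] = ((8 * s - 3) * (s - 3)) / (3 * s ^+ 3).
    have nE : n = (s ^+ 2 - 9) / 3 by rewrite s2; field.
    by rewrite fE nE; field; rewrite ?pnatr_eq0 ?expf_neq0 // gt_eqF.
  apply: divr_ge0; first by apply: mulr_ge0; lra.
  by apply: mulr_ge0; [lra | apply: exprn_ge0; lra].
have inv_s_ge0 : 0 <= s^-1 by rewrite invr_ge0 ltW.
have f_sign : f.[0] <= 0 <= f.[s^-1] by rewrite f_inv_s fE; apply/andP; split=> //; lra.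
have [k /andP [k_ge0 k_le] /rootP] := poly_ivt inv_s_ge0 f_sign; rewrite fE => fk.
exists k; first by lra.
have ks_le1 : k * s <= 1 by rewrite -(mulVf (lt0r_neq0 s_gt0)) ler_wpM2r // ltW.
have [->|k_neq0] := eqVneq k 0; first by nra.
have k_gt0 : 0 < k by rewrite lt_neqAle eq_sym k_neq0 k_ge0.
have ks_ge0 : 0 <= k * s by rewrite mulr_ge0 // ltW.
have : k ^+ 2 * s ^+ 2 <= 1 by nra.
by rewrite s2; nra.
Qed.

Lemma twist_params_exist n : 0 <= n -> exists al be ga, twist_params al be ga n.
Proof.
move=> n_ge0; have [k fk pos] := twist_ratio_exists n_ge0.
pose al := (1 - 3 * k ^+ 2 * n)^-1 `^ 3^-1.
have al3 : al ^+ 3 = (1 - 3 * k ^+ 2 * n)^-1 by rewrite powR_inv3K // invr_ge0 ltW.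
have al3K : al ^+ 3 * (1 - 3 * k ^+ 2 * n) = 1 by rewrite al3 mulVf // lt0r_neq0.
have al2_gt0 : 0 < al ^+ 2.
  rewrite lt_neqAle sqr_ge0 andbT eq_sym sqrf_eq0; apply/eqP => al0.
  by move: al3K; rewrite al0 expr0n /= mul0r => /eqP; rewrite eq_sym oner_eq0.
have p_gt0 : 0 < al ^+ 2 + (k * al) ^+ 2 * n.
  by have := mulr_ge0 (sqr_ge0 (k * al)) n_ge0; lra.
exists al, (- 4 * al * (k * al) ^+ 2 / (al ^+ 2 + (k * al) ^+ 2 * n)), (k * al); split.
- by rewrite -[RHS]al3K; ring.
- have -> : 3 * al ^+ 2 * (k * al) - (k * al) ^+ 3 * n =
      al ^+ 3 * (1 - 3 * k ^+ 2 * n) - al ^+ 3 * (1 - 3 * k - 3 * n * k ^+ 2 + n * k ^+ 3).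
    by ring.
  by rewrite fk mulr0 subr0.
- by field; rewrite lt0r_neq0.
Qed.

Section Consequences.
Variables (al be ga n : R).
Hypotheses (n_ge0 : 0 <= n) (params : twist_params al be ga n).
Local Notation p := (al ^+ 2 + ga ^+ 2 * n).
Local Notation q := (2 * al * be + be ^+ 2 * n - ga ^+ 2).

Lemma twist_scalar_gt0 : 0 < p.
Proof.
have [c1 _ _] := params.
have al2_gt0 : 0 < al ^+ 2.
  rewrite lt_neqAle sqr_ge0 andbT eq_sym sqrf_eq0; apply/eqP => al0.
  by move: c1; rewrite al0 expr0n /= !(mulr0, mul0r) subr0 => /eqP; rewrite eq_sym oner_eq0.
by have := mulr_ge0 (sqr_ge0 ga) n_ge0; lra.
Qed.

Lemma twist_scalar_cube : p ^+ 3 = 1 + n.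
Proof.
have [c1 c2 _] := params.
transitivity ((al ^+ 3 - 3 * al * ga ^+ 2 * n) ^+ 2 + n * (3 * al ^+ 2 * ga - ga ^+ 3 * n) ^+ 2).
  by ring.
by rewrite c1 c2; ring.
Qed.

Lemma twist_scalarE : p = (1 + n) `^ 3^-1.
Proof.
have p_gt0 := twist_scalar_gt0.
apply/eqP; rewrite -(@eqrXn2 _ 3) // ?powR_ge0 ?ltW // twist_scalar_cube powR_inv3K //.
by rewrite addr_ge0.
Qed.

Lemma twist_gram_relation : p + q * (1 + n) = 0.
Proof.
have [c1 c2 c3] := params; have p_neq0 := lt0r_neq0 twist_scalar_gt0.
have be_p : be * p = - 4 * al * ga ^+ 2 by rewrite -[LHS]subr0 -c3; ring.
apply: (mulIf (expf_neq0 2 p_neq0)); rewrite mul0r.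
transitivity (p ^+ 3 + (1 + n) * (2 * al * p * (be * p) + n * (be * p) ^+ 2 - ga ^+ 2 * p ^+ 2)).
  by ring.
rewrite be_p.
transitivity ((al ^+ 3 - 3 * al * ga ^+ 2 * n) ^+ 2 - (3 * al ^+ 2 * ga - ga ^+ 3 * n) ^+ 2).
  by ring.
by rewrite c1 c2 subrr.
Qed.

End Consequences.

End TwistParameters.

Section ScalarPlusRankOne.
Variables (F : fieldType) (m : nat).
Implicit Types (A B : 'M[F]_m) (p q n : F) (W : 'cV[F]_m).

Lemma invmx_right A B : A *m B = 1%:M -> invmx A = B.
Proof.
move=> AB; have [A_unit _] := mulmx1_unit AB.
by rewrite -[invmx A]mulmx1 -AB mulmxA mulVmx // mul1mx.
Qed.

Lemma scalar_rank1_mulmx p q n W : (W^T *m W) 0 0 = n -> p + q * (1 + n) = 0 ->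
  (p *: 1%:M + q *: (W *m W^T)) *m (1%:M + W *m W^T) = p *: 1%:M.
Proof.
move=> WW pq; have PP : W *m W^T *m (W *m W^T) = n *: (W *m W^T).
  by rewrite mulmxA -(mulmxA W) [W^T *m W]mx11_scalar WW mul_mx_scalar -scalemxAl.
have pE : p = - (q * (1 + n)) by apply/eqP; rewrite -addr_eq0 pq.
rewrite mulmxDr mulmx1 mulmxDl -!scalemxAl mul1mx PP pE.
by apply/matrixP => i j; rewrite !mxE; ring.
Qed.

End ScalarPlusRankOne.

Section TwistedStructure.
Variable R : realType.
Variables (phi : form3 R) (P : 'M[R]_7) (w : vec R) (al be ga : R).
Hypotheses (P_adapted : adapted phi P) (params : twist_params al be ga (norm2 (P *m w))).
Local Notation W := (P *m w).
Local Notation T := (twist_mx al be ga W).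
Local Notation n := (norm2 W).
Local Notation p := (al ^+ 2 + ga ^+ 2 * n).

Lemma twist_gram_inverse :
  T^T *m T *m (p^-1 *: (1%:M + W *m W^T)) = 1%:M.
Proof.
have p_neq0 := lt0r_neq0 (twist_scalar_gt0 (norm2_ge0 W) params).
rewrite -scalemxAr twist_gram (@scalar_rank1_mulmx _ _ _ _ n) //.
  by rewrite scalerA mulVf // scale1r.
exact: twist_gram_relation (norm2_ge0 W) params.
Qed.

Lemma twisted_adapted : adapted (add3 phi (contr4 w (hodge3 P phi))) (T *m P).
Proof.
have [P_unit phiE] := P_adapted.
have T_unit : T \in unitmx.
  have [TtT_unit _] := mulmx1_unit twist_gram_inverse.
  by move: TtT_unit; rewrite unitmx_mul => /andP [].
split=> [|u v x]; first by rewrite unitmx_mul T_unit.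
by rewrite /add3 /contr4 (hodge3_adapted _ _ _ _ P_adapted) phiE -!mulmxA twist_pullback.
Qed.

Lemma invmx_twisted_metric :
  invmx (metric_mx (T *m P)) = ((1 + n) `^ 3^-1)^-1 *: (invmx (metric_mx P) + w *m w^T).
Proof.
have [P_unit _] := P_adapted; have Pt_unit : P^T \in unitmx by rewrite unitmx_tr.
have gP_inv : invmx (metric_mx P) = invmx P *m invmx P^T.
  apply: invmx_right.
  by rewrite /metric_mx -mulmxA (mulmxA P) mulmxV // mul1mx mulmxV.
have ww : w *m w^T = invmx P *m (W *m W^T) *m invmx P^T.
  by rewrite trmx_mul !mulmxA mulVmx // mul1mx -mulmxA mulmxV // mulmx1.
have sumE : invmx P *m invmx P^T + invmx P *m (W *m W^T) *m invmx P^T =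
            invmx P *m (1%:M + W *m W^T) *m invmx P^T by rewrite mulmxDr mulmxDl mulmx1.
rewrite -(twist_scalarE (norm2_ge0 W) params) gP_inv ww sumE; apply: invmx_right.
have -> : metric_mx (T *m P) *m (p^-1 *: (invmx P *m (1%:M + W *m W^T) *m invmx P^T)) =
          P^T *m (T^T *m T *m (p^-1 *: (1%:M + W *m W^T))) *m invmx P^T.
  by rewrite /metric_mx trmx_mul -!scalemxAr -!scalemxAl !mulmxA (mulmxK P_unit).
by rewrite twist_gram_inverse mulmx1 mulmxV.
Qed.

End TwistedStructure.

Unset Implicit Arguments.
Theorem mainTheorem14 (R : realType) (phi_o : form3 R) (P : 'M[R]_7) (w : vec R) :
  adapted phi_o P ->
  let phit := add3 phi_o (contr4 w (hodge3 P phi_o)) in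
  let g_o := metric_mx P in
  is_G2 phit /\
  forall Pt : 'M[R]_7, adapted phit Pt ->
    invmx (metric_mx Pt) =
      ((1 + (w^T *m g_o *m w) ord0 ord0) `^ (3%:R)^-1)^-1 *: (invmx g_o + w *m w^T).
Proof.
move=> P_adapted phit g_o.
have [al [be [ga params]]] := twist_params_exist (norm2_ge0 (P *m w)).
have T_adapted := twisted_adapted P_adapted params.
split; first by exists (twist_mx al be ga (P *m w) *m P).
move=> Pt Pt_adapted.
rewrite (adapted_metric_unique T_adapted Pt_adapted) (invmx_twisted_metric P_adapted params).
by rewrite /g_o /metric_mx /norm2 trmx_mul !mulmxA.
Qed.
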